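(* Let $\widetilde{\Sigma}_1,\ldots,\widetilde{\Sigma}_n$ be pairwise disjoint visibly pushdown alphabets and $P_k\subseteq\widetilde{\Sigma}_k^*$ well-matched visibly pushdown languages, each equipped with a semantics $\mathcal{F}_k$ as described in the context, and let $\mathcal{M}$ (the $n$-stack semantics) and $\mathcal{S}$ (the single-stack semantics) be defined from them as in the context. Then for every word $\rho\in P_1\bowtie\cdots\bowtie P_n$ and all assertions $A,B$ over the valuations in $V$, the Hoare triple $\{A\}\rho\{B\}$ is valid with respect to $\mathcal{M}$ if and only if it is valid with respect to $\mathcal{S}$.
   Context: A visibly pushdown (VP) alphabet is a finite alphabet partitioned into calls, returns and internals; $\Sigma^{\mathsf{call}}_k,\Sigma^{\mathsf{ret}}_k,\Sigma^{\mathsf{int}}_k$ are those of $\widetilde{\Sigma}_k$, and $\widetilde{\Sigma}=\biguplus_k\widetilde{\Sigma}_k$. Calls and returns are matched like parentheses (internals ignored); well-matched = all matched. Shuffle $P_1\parallel\cdots\parallel P_n=\{w\in\widetilde{\Sigma}^*:\Pi_{\widetilde{\Sigma}_k}(w)\in P_k\ \forall k\}$; a word is well-nested if every matched call–return pair consists of letters from the same $\widetilde{\Sigma}_k$; $P_1\bowtie\cdots\bowtie P_n$ is the set of well-nested words of the shuffle. Program $k$ has its own variables (disjoint across programs); $V_k$ is its set of valuations, and $V$ is the set of valuations of all variables, identified with tuples $\nu=(\nu|_1,\ldots,\nu|_n)$, $\nu|_j\in V_j$. A stack is a nonempty finite sequence of frames; $S.\nu$ denotes a stack with top frame $\nu$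 and rest $S$. Semantics $\mathcal{F}_k$: for $c\in\Sigma^{\mathsf{call}}_k$, $\mathcal{F}_k(c):V_k\to 2^{V_k}$; for $r\in\Sigma^{\mathsf{ret}}_k$, $\mathcal{F}_k(r):V_k\times V_k\to 2^{V_k}$; for $a\in\Sigma^{\mathsf{int}}_k$, $\mathcal{F}_k(a):V_k\to 2^{V_k}$. $n$-stack semantics: for $x\in\widetilde{\Sigma}_k$, $\mathcal{M}(x)$ relates tuples $(S_1,\ldots,S_n)$ of stacks ($S_j$ over $V_j$) leaving components $j\ne k$ unchanged and changing the $k$-th as: call $x$: $S.\nu\mapsto S.\nu.\nu'$ with $\nu'\in\mathcal{F}_k(x)(\nu)$; return $x$: $S.\nu_<.\nu\mapsto S.\nu'$ with $\nu'\in\mathcal{F}_k(x)(\nu,\nu_<)$; internal $x$: $S.\nu\mapsto S.\nu'$ with $\nu'\in\mathcal{F}_k(x)(\nu)$. Single-stack semantics on stacks over $V$: for $x\in\widetilde{\Sigma}_k$, call: $S.\nu\mapsto S.\nu.\nu'$ with $\nu'|_k\in\mathcal{F}_k(x)(\nu|_k)$, $\nu'|_j=\nu|_j$ ($j\ne k$); return: $S.\nu_<.\nu\mapsto S.\nu'$ with $\nu'|_k\in\mathcal{F}_k(x)(\nu|_k,\nu_<|_k)$, $\nu'|_j=\nu|_j$ ($j\ne k$); internal: $S.\nu\mapsto S.\nu'$ with $\nu'|_k\in\mathcal{F}_k(x)(\nu|_k)$, $\nu'|_j=\nu|_j$ ($j\ne k$). Both are extended to words by relational composition. $\{A\}\rho\{B\}$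 is valid w.r.t. $\mathcal{M}$ if for all $((S_1.\nu_1,\ldots,S_n.\nu_n),(S_1'.\nu_1',\ldots,S_n'.\nu_n'))\in\mathcal{M}(\rho)$, $(\nu_1,\ldots,\nu_n)\models A$ implies $(\nu'_1,\ldots,\nu'_n)\models B$; valid w.r.t. $\mathcal{S}$ if for all $(S.\nu,S'.\nu')\in\mathcal{S}(\rho)$, $\nu\models A$ implies $\nu'\models B$. *)

From mathcomp Require Import all_boot.
Set Implicit Arguments. Unset Strict Implicit. Unset Printing Implicit Defensive.

(* The disjoint union of the VP alphabets Sigma_1,...,Sigma_n is a finite type X;
   [comp x : 'I_n] says to which Sigma_k the letter x belongs, and
   [kind x] says whether x is a call, a return or an internal letter. *)
Inductive letter_kind := KCall | KRet | KInt.

Fixpoint rel_word (X T : Type) (R : X -> T -> T -> Prop) (w : seq X) : T -> T -> Prop :=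
  match w with
  | [::] => fun a b => a = b
  | x :: w' => fun a c => exists b, R x a b /\ rel_word R w' b c
  end.

Section VP.
Variables (X : finType) (kind : X -> letter_kind).

Inductive well_matched : seq X -> Prop :=
| wm_nil : well_matched [::]
| wm_int a w : kind a = KInt -> well_matched w -> well_matched (a :: w)
| wm_callret c w1 r w2 : kind c = KCall -> kind r = KRet ->
    well_matched w1 -> well_matched w2 -> well_matched (c :: w1 ++ r :: w2).

Definition matched (x0 : X) (w : seq X) (i j : nat) : Prop :=
  [/\ i < j, j < size w, kind (nth x0 w i) = KCall, kind (nth x0 w j) = KRet
    & well_matched (take (j - i.+1) (drop i.+1 w))].

End VP.

(* Visibly pushdown automata over X (nondeterministic, acceptance by final
   state; returns on the empty stack read the bottom symbol, encoded as None). *)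
Record VPA (X : finType) := {
  vQ : finType;
  vG : finType;
  v_init : pred vQ;
  v_final : pred vQ;
  v_call : vQ -> X -> vQ -> vG -> bool;
  v_ret  : vQ -> X -> option vG -> vQ -> bool;
  v_int  : vQ -> X -> vQ -> bool
}.

Section VP2.
Variables (X : finType) (kind : X -> letter_kind).

Definition vpa_step (A : VPA X) (x : X) (c c' : vQ A * seq (vG A)) : Prop :=
  match kind x with
  | KCall => exists g, @v_call X A c.1 x c'.1 g /\ c'.2 = g :: c.2
  | KRet => (exists g, c.2 = g :: c'.2 /\ @v_ret X A c.1 x (Some g) c'.1)
            \/ (c.2 = [::] /\ c'.2 = [::] /\ @v_ret X A c.1 x None c'.1)
  | KInt => @v_int X A c.1 x c'.1 /\ c'.2 = c.2
  end.

Definition vpa_accepts (A : VPA X) (w : seq X) : Prop :=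
  exists q0 qf st, @v_init X A q0 /\ @v_final X A qf /\
    rel_word (@vpa_step A) w (q0, [::]) (qf, st).

Definition is_VPL (L : seq X -> Prop) : Prop :=
  exists A : VPA X, forall w, L w <-> vpa_accepts A w.
End VP2.

Section Shuffle.
Variables (n : nat) (X : finType) (kind : X -> letter_kind) (comp : X -> 'I_n).

Definition proj (k : 'I_n) (w : seq X) : seq X := [seq x <- w | comp x == k].

Definition well_nested (w : seq X) : Prop :=
  forall x0 i j, matched kind x0 w i j -> comp (nth x0 w i) = comp (nth x0 w j).

Definition in_bowtie (P : 'I_n -> seq X -> Prop) (w : seq X) : Prop :=
  (forall k, P k (proj k w)) /\ well_nested w.
End Shuffle.

(* A stack is a nonempty sequence of frames: (S, nu) stands for S.nu, the top
   frame being nu; S is listed from the frame just below the top downwards. *)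
Definition stack (T : Type) := (seq T * T)%type.

Section Sem.
Variables (n : nat) (X : finType) (kind : X -> letter_kind) (comp : X -> 'I_n).
Variable V : 'I_n -> Type.
Definition Vall := forall k, V k.

(* Fc x nu nu'      : nu' \in F_k(x)(nu)       (x call or internal of Sigma_k)
   Fr x nu nul nu'  : nu' \in F_k(x)(nu, nul)  (x return of Sigma_k)        *)
Variable Fc : forall x : X, V (comp x) -> V (comp x) -> Prop.
Variable Fr : forall x : X, V (comp x) -> V (comp x) -> V (comp x) -> Prop.

Definition local_step (x : X) (s s' : stack (V (comp x))) : Prop :=
  match kind x with
  | KCall => exists S nu nu', [/\ s = (S, nu), Fc nu nu' & s' = (nu :: S, nu')]
  | KRet => exists S nul nu nu',
              [/\ s = (nul :: S, nu), Fr nu nul nu' & s' = (S, nu')]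
  | KInt => exists S nu nu', [/\ s = (S, nu), Fc nu nu' & s' = (S, nu')]
  end.

Definition Mstep (x : X) (C C' : forall k, stack (V k)) : Prop :=
  local_step (C (comp x)) (C' (comp x)) /\
  (forall j, j != comp x -> C' j = C j).

Definition frame_upd (x : X) (nu nu' : Vall) : Prop :=
  forall j, j != comp x -> nu' j = nu j.

Definition Sstep (x : X) (s s' : stack Vall) : Prop :=
  match kind x with
  | KCall => exists S nu nu', [/\ s = (S, nu), s' = (nu :: S, nu'),
               Fc (nu (comp x)) (nu' (comp x)) & frame_upd x nu nu']
  | KRet => exists S nul nu nu', [/\ s = (nul :: S, nu), s' = (S, nu'),
               Fr (nu (comp x)) (nul (comp x)) (nu' (comp x)) & frame_upd x nu nu']
  | KInt => exists S nu nu', [/\ s = (S, nu), s' = (S, nu'),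
               Fc (nu (comp x)) (nu' (comp x)) & frame_upd x nu nu']
  end.

Definition valid_M (A B : Vall -> Prop) (rho : seq X) : Prop :=
  forall C C' : forall k, stack (V k), rel_word Mstep rho C C' ->
    A (fun k => (C k).2) -> B (fun k => (C' k).2).

Definition valid_S (A B : Vall -> Prop) (rho : seq X) : Prop :=
  forall s s' : stack Vall, rel_word Sstep rho s s' -> A s.2 -> B s'.2.
End Sem.

From mathcomp Require Import all_boot zify.
From Stdlib Require Import FunctionalExtensionality.
Set Implicit Arguments. Unset Strict Implicit. Unset Printing Implicit Defensive.

(* Because rho is well
   nested, each return pops the frame pushed by its matching call, which lies
   in the same component.  Hence on a well-matched factor both semantics
   restore everything below the top frame(s) and change the top valuations in
   the same way: pushing the whole valuation on the single stack at a call of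
   component k amounts to pushing its k-th component on the k-th stack.  That
   rho is well matched follows by counting stack heights: the height along rho
   is the sum of the heights along its projections. *)

Lemma rel_word_cat (X T : Type) (R : X -> T -> T -> Prop) u v a c :
  rel_word R (u ++ v) a c <-> exists b, rel_word R u a b /\ rel_word R v b c.
Proof.
elim: u a => [|x u IH] a /=; first by split; [exists a | case=> b [->]].
split.
  by case=> b [hb /IH [b' [h1 h2]]]; exists b'; split => //; exists b.
by case=> b' [[b [hb h1]] h2]; exists b; split => //; apply/IH; exists b'.
Qed.

Section StackHeight.
Variables (X : finType) (kind : X -> letter_kind).

Fixpoint stack_height (w : seq X) (h : nat) : option nat :=
  if w is x :: w' then
    match kind x with
    | KCall => stack_height w' h.+1
    | KRet => if h is h'.+1 then stack_height w' h' else None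
    | KInt => stack_height w' h
    end
  else Some h.

Lemma stack_height_cat u v h :
  stack_height (u ++ v) h = obind (stack_height v) (stack_height u h).
Proof.
elim: u h => [|x u IH] h //=.
by case: (kind x); [| case: h => [|h] |]; rewrite ?IH.
Qed.

Lemma stack_height_addn w h h' k :
  stack_height w h = Some h' -> stack_height w (h + k) = Some (h' + k).
Proof.
elim: w h => [|x w IH] h /=; first by case=> ->.
by case: (kind x); [exact: IH | case: h => [|h] //; exact: IH | exact: IH].
Qed.

Lemma well_matched_stack_height w h :
  well_matched kind w -> stack_height w h = Some h.
Proof.
move=> wm_w; elim: wm_w h => {w} [|a w ka _ IH|c w1 r w2 kc kr _ IH1 _ IH2] h //=.
  by rewrite ka IH.
by rewrite kc stack_height_cat IH1 /= kr IH2.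
Qed.

Lemma stack_height_first_return m w h : size w <= m ->
  stack_height w h.+1 = Some 0 ->
  exists w1 r w2, [/\ w = w1 ++ r :: w2, kind r = KRet,
                      stack_height w1 0 = Some 0 & stack_height w2 h = Some 0].
Proof.
elim: m w h => [|m IHm] [|x w] h //= size_w; case kx: (kind x) => hw.
- have [w1 [r [w2 [e kr hw1 hw2]]]] := IHm w h.+1 size_w hw.
  have size_w2 : size w2 <= m by move: size_w; rewrite e size_cat /=; lia.
  have [w3 [r' [w4 [e' kr' hw3 hw4]]]] := IHm w2 h size_w2 hw2.
  exists (x :: w1 ++ r :: w3), r', w4; split => //; first by rewrite e e' /= -catA.
  by rewrite /= kx stack_height_cat (stack_height_addn 1 hw1) /= kr.
- by exists [::], x, w.
- have [w1 [r [w2 [-> kr hw1 hw2]]]] := IHm w h size_w hw.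
  by exists (x :: w1), r, w2; rewrite /= kx.
Qed.

Lemma stack_height_well_matched w :
  stack_height w 0 = Some 0 -> well_matched kind w.
Proof.
move: (leqnn (size w)); move: {2}(size w) => m.
elim: m w => [|m IHm] [|x w] //= size_w; try by constructor.
case kx: (kind x) => // hw; last by apply: wm_int => //; apply: IHm.
have [w1 [r [w2 [e kr hw1 hw2]]]] := stack_height_first_return size_w hw.
have [size_w1 size_w2] : size w1 <= m /\ size w2 <= m.
  by move: size_w; rewrite e size_cat /=; lia.
by rewrite e; apply: wm_callret => //; apply: IHm.
Qed.

End StackHeight.

Section ShuffleHeight.
Variables (n : nat) (X : finType) (kind : X -> letter_kind) (comp : X -> 'I_n).

Lemma sum_succ_at (a : 'I_n) (f : 'I_n -> nat) :
  \sum_k (if a == k then (f k).+1 else f k) = (\sum_k f k).+1.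
Proof.
rewrite [LHS](bigD1 a) // [in RHS](bigD1 a) //= eqxx addSn; congr (_ + _).+1.
by apply: eq_bigr => k; rewrite eq_sym => /negbTE ->.
Qed.

Lemma proj_cons k x w : proj comp k (x :: w) =
  if comp x == k then x :: proj comp k w else proj comp k w.
Proof. by rewrite /proj /=; case: (comp x == k). Qed.

Lemma stack_height_proj w (h h' : 'I_n -> nat) :
  (forall k, stack_height kind (proj comp k w) (h k) = Some (h' k)) ->
  stack_height kind w (\sum_k h k) = Some (\sum_k h' k).
Proof.
elim: w h => [|x w IH] h hw.
  by congr Some; apply: eq_bigr => k _; case: (hw k).
rewrite /=; case kx: (kind x).
- rewrite -(sum_succ_at (comp x)); apply: IH => k; have := hw k.
  by rewrite proj_cons; case: eqP => //= <-; rewrite kx.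
- pose h1 k := if comp x == k then (h k).-1 else h k.
  have h_x_gt0 : 0 < h (comp x).
    by move: (hw (comp x)); rewrite proj_cons eqxx /= kx; case: (h (comp x)).
  have -> : \sum_k h k = (\sum_k h1 k).+1.
    rewrite -(sum_succ_at (comp x)); apply: eq_bigr => k _; rewrite /h1.
    by case: eqP => // <-; rewrite prednK.
  apply: IH => k; have := hw k; rewrite proj_cons /h1.
  by case: eqP => //= <-; rewrite kx; case: (h (comp x)) h_x_gt0.
- apply: IH => k; have := hw k.
  by rewrite proj_cons; case: eqP => //= <-; rewrite kx.
Qed.

Lemma well_matched_proj w :
  (forall k, well_matched kind (proj comp k w)) -> well_matched kind w.
Proof.
move=> wm_proj; apply: stack_height_well_matched.
have := @stack_height_proj w (fun _ => 0) (fun _ => 0)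
  (fun k => well_matched_stack_height 0 (wm_proj k)).
by rewrite big1_eq.
Qed.

End ShuffleHeight.

Section WellNested.
Variables (n : nat) (X : finType) (kind : X -> letter_kind) (comp : X -> 'I_n).

Lemma matched_catl u v (x0 : X) i j : matched kind x0 v i j ->
  matched kind x0 (u ++ v) (size u + i) (size u + j).
Proof.
have nth_shift k : nth x0 (u ++ v) (size u + k) = nth x0 v k.
  by rewrite nth_cat ltnNge leq_addr /= addKn.
case=> lt_ij lt_j ki kj wm_ij; split; rewrite ?nth_shift ?size_cat //; try lia.
have -> : size u + j - (size u + i).+1 = j - i.+1 by lia.
by rewrite -addnS drop_cat ltnNge leq_addr /= addKn.
Qed.

Lemma matched_catr u v (x0 : X) i j : matched kind x0 u i j ->
  matched kind x0 (u ++ v) i j.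
Proof.
case=> lt_ij lt_j ki kj wm_ij; split; rewrite ?size_cat ?nth_cat ?lt_j //; try lia.
  by rewrite (ltn_trans lt_ij lt_j).
have lt_i : i.+1 < size u by lia.
by rewrite drop_cat lt_i take_cat size_drop ifT //; apply/idP; lia.
Qed.

Lemma well_nested_prefix u v :
  well_nested kind comp (u ++ v) -> well_nested kind comp u.
Proof.
move=> wn x0 i j m; have [lt_ij lt_j _ _ _] := m.
by have := wn x0 i j (matched_catr v m); rewrite !nth_cat lt_j (ltn_trans lt_ij lt_j).
Qed.

Lemma well_nested_suffix u v :
  well_nested kind comp (u ++ v) -> well_nested kind comp v.
Proof.
move=> wn x0 i j m.
have := wn x0 _ _ (matched_catl u m).
by rewrite !nth_cat !ltnNge !leq_addr /= !addKn.
Qed.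

Lemma well_nested_callret c w1 r w2 :
  kind c = KCall -> kind r = KRet -> well_matched kind w1 ->
  well_nested kind comp (c :: w1 ++ r :: w2) ->
  [/\ comp c = comp r, well_nested kind comp w1 & well_nested kind comp w2].
Proof.
move=> kc kr wm_w1 wn; split.
- have := wn c 0 (size w1).+1; rewrite /= nth_cat ltnn subnn /=; apply.
  split => //=; first by rewrite size_cat /=; lia.
    by rewrite nth_cat ltnn subnn.
  by rewrite subn1 /= drop0 take_size_cat.
- exact: well_nested_prefix (well_nested_suffix (u := [:: c]) wn).
- by apply: (well_nested_suffix (u := c :: w1 ++ [:: r])); rewrite /= -catA.
Qed.

End WellNested.

Section Simulation.
Variables (n : nat) (X : finType) (kind : X -> letter_kind) (comp : X -> 'I_n).
Variable V : 'I_n -> Type.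
Variable Fc : forall x : X, V (comp x) -> V (comp x) -> Prop.
Variable Fr : forall x : X, V (comp x) -> V (comp x) -> V (comp x) -> Prop.

Local Notation config := (forall k, stack (V k)).
Local Notation Mstep := (Mstep kind Fc Fr).
Local Notation Sstep := (Sstep kind Fc Fr).

Definition tops (C : config) : Vall V := fun k => (C k).2.

Definition retop (C : config) (nu : Vall V) : config := fun k => ((C k).1, nu k).

Definition push (k : 'I_n) (C : config) (nu : Vall V) : config :=
  fun j => (if k == j then (C j).2 :: (C j).1 else (C j).1, nu j).

Lemma retop_tops C : retop C (tops C) = C.
Proof.
by apply: functional_extensionality_dep => k; rewrite /retop /tops -surjective_pairing.
Qed.

Lemma Sstep_int_Mstep a S nu s : kind a = KInt -> Sstep a (S, nu) s ->
  exists2 nu', s = (S, nu') & forall C, tops C = nu -> Mstep a C (retop C nu').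
Proof.
move=> ka; rewrite /Sstep ka => -[_ [_ [nu' [[<- <-] -> F_a upd]]]].
exists nu' => // C eC; subst nu; split.
  rewrite /local_step ka.
  by exists (C (comp a)).1, (C (comp a)).2, (nu' (comp a)); rewrite -surjective_pairing.
by move=> j /upd; rewrite /retop /tops => ->; rewrite -surjective_pairing.
Qed.

Lemma Sstep_call_Mstep c S nu s : kind c = KCall -> Sstep c (S, nu) s ->
  exists2 nu', s = (nu :: S, nu') &
    forall C, tops C = nu -> Mstep c C (push (comp c) C nu').
Proof.
move=> kc; rewrite /Sstep kc => -[_ [_ [nu' [[<- <-] -> F_c upd]]]].
exists nu' => // C eC; subst nu; split.
  rewrite /local_step kc.
  exists (C (comp c)).1, (C (comp c)).2, (nu' (comp c)).
  by rewrite -surjective_pairing /push eqxx.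
by move=> j j_c; rewrite /push eq_sym (negbTE j_c) upd // -surjective_pairing.
Qed.

Lemma Sstep_ret_Mstep r S nul nu s : kind r = KRet -> Sstep r (nul :: S, nu) s ->
  exists2 nu', s = (S, nu') &
    forall C, tops C = nul -> Mstep r (push (comp r) C nu) (retop C nu').
Proof.
move=> kr; rewrite /Sstep kr => -[_ [_ [_ [nu' [[<- <- <-] -> F_r upd]]]]].
exists nu' => // C eC; subst nul; split.
  rewrite /local_step kr.
  exists (C (comp r)).1, (C (comp r)).2, (nu (comp r)), (nu' (comp r)).
  by rewrite /push eqxx.
by move=> j j_r; rewrite /push /retop eq_sym (negbTE j_r) upd.
Qed.

Lemma Mstep_int_Sstep a C C' : kind a = KInt -> Mstep a C C' ->
  exists2 nu', C' = retop C nu' & forall S, Sstep a (S, tops C) (S, nu').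
Proof.
move=> ka [+ upd]; rewrite /local_step ka => -[S0 [nu0 [nu' [eC F_a eC']]]].
exists (tops C').
  apply: functional_extensionality_dep => j; rewrite /retop /tops.
  case: (eqVneq j (comp a)) => [->|j_a]; first by rewrite eC eC'.
  by rewrite upd // -surjective_pairing.
move=> S; rewrite /Sstep ka; exists S, (tops C), (tops C'); split => //.
  by rewrite /tops eC eC'.
by move=> j /upd; rewrite /tops => ->.
Qed.

Lemma Mstep_call_Sstep c C C' : kind c = KCall -> Mstep c C C' ->
  exists2 nu', C' = push (comp c) C nu' &
    forall S, Sstep c (S, tops C) (tops C :: S, nu').
Proof.
move=> kc [+ upd]; rewrite /local_step kc => -[S0 [nu0 [nu' [eC F_c eC']]]].
exists (tops C').
  apply: functional_extensionality_dep => j; rewrite /push /tops.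
  case: (eqVneq j (comp c)) => [->|j_c]; first by rewrite eC eC'.
  by rewrite upd // -surjective_pairing.
move=> S; rewrite /Sstep kc; exists S, (tops C), (tops C'); split => //.
  by rewrite /tops eC eC'.
by move=> j /upd; rewrite /tops => ->.
Qed.

Lemma Mstep_ret_Sstep r C nu C' : kind r = KRet -> Mstep r (push (comp r) C nu) C' ->
  exists2 nu', C' = retop C nu' & forall S, Sstep r (tops C :: S, nu) (S, nu').
Proof.
move=> kr [+ upd]; rewrite /local_step kr /push eqxx.
move=> -[S0 [nul [nu0 [nu' [[enul eS enu] F_r eC']]]]].
exists (tops C').
  apply: functional_extensionality_dep => j; rewrite /retop /tops.
  case: (eqVneq j (comp r)) => [->|j_r]; first by rewrite eC' eS.
  by rewrite upd // /push eq_sym (negbTE j_r).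
move=> S; rewrite /Sstep kr; exists S, (tops C), nu, (tops C'); split => //.
  by rewrite /tops eC' enul enu.
by move=> j /upd; rewrite /tops /push eq_sym => ->; case: eqP.
Qed.

Lemma rel_word_Sstep_Mstep w : well_matched kind w -> well_nested kind comp w ->
  forall S nu s, rel_word Sstep w (S, nu) s ->
  exists2 nu', s = (S, nu') &
    forall C, tops C = nu -> rel_word Mstep w C (retop C nu').
Proof.
elim=> {w} [|a w ka _ IH|c w1 r w2 kc kr wm_w1 IH1 _ IH2] wn S nu s /=.
- by move=> <-; exists nu => // C <-; rewrite retop_tops.
- case=> -[S1 nu1] [/(Sstep_int_Mstep ka) [_ [-> <-] Ma] run_w].
  have [nu' -> Mw] := IH (well_nested_suffix (u := [:: a]) wn) _ _ _ run_w.
  by exists nu' => // C eC; exists (retop C nu1); split; [exact: Ma | exact: Mw].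
- have [cr wn_w1 wn_w2] := well_nested_callret kc kr wm_w1 wn.
  case=> -[S1 nu1] [/(Sstep_call_Mstep kc) [_ [-> <-] Mc]].
  move=> /rel_word_cat [[S2 nu2] [/IH1 [//|_ [-> <-] Mw1]]].
  case=> -[S3 nu3] [/(Sstep_ret_Mstep kr) [_ [-> <-] Mr] /IH2 [//|nu' -> Mw2]].
  exists nu' => // C eC; exists (push (comp c) C nu1); split; first exact: Mc.
  apply/rel_word_cat; exists (push (comp c) C nu2); split; first exact: Mw1.
  by exists (retop C nu3); split; [rewrite cr; exact: Mr | exact: Mw2].
Qed.

Lemma rel_word_Mstep_Sstep w : well_matched kind w -> well_nested kind comp w ->
  forall C C', rel_word Mstep w C C' ->
  exists2 nu', C' = retop C nu' &
    forall S, rel_word Sstep w (S, tops C) (S, nu').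
Proof.
elim=> {w} [|a w ka _ IH|c w1 r w2 kc kr wm_w1 IH1 _ IH2] wn C C' /=.
- by move=> <-; exists (tops C) => //; rewrite retop_tops.
- case=> C1 [/(Mstep_int_Sstep ka) [nu1 -> Sa] /IH [|nu' -> Sw]].
    exact: (well_nested_suffix (u := [:: a])).
  by exists nu' => // S; exists (S, nu1).
- have [cr wn_w1 wn_w2] := well_nested_callret kc kr wm_w1 wn.
  case=> C1 [/(Mstep_call_Sstep kc) [nu1 -> Sc]].
  move=> /rel_word_cat [C2 [/IH1 [//|nu2 -> Sw1]]].
  rewrite cr; case=> C3 [/(Mstep_ret_Sstep kr) [nu3 -> Sr] /IH2 [//|nu' -> Sw2]].
  exists nu' => // S; exists (tops C :: S, nu1); split; first exact: Sc.
  apply/rel_word_cat; exists (tops C :: S, nu2); split; first exact: Sw1.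
  by exists (S, nu3); split; [exact: Sr | exact: Sw2].
Qed.

End Simulation.

Theorem theorem7p1 (n : nat) (X : finType) (kind : X -> letter_kind)
    (comp : X -> 'I_n) (P : 'I_n -> seq X -> Prop)
    (hP_alph : forall k w, P k w -> all (fun x => comp x == k) w)
    (hP_vp : forall k, is_VPL kind (P k))
    (hP_wm : forall k w, P k w -> well_matched kind w)
    (V : 'I_n -> Type)
    (Fc : forall x : X, V (comp x) -> V (comp x) -> Prop)
    (Fr : forall x : X, V (comp x) -> V (comp x) -> V (comp x) -> Prop)
    (rho : seq X) (hrho : in_bowtie kind comp P rho)
    (A B : Vall V -> Prop) :
  valid_M kind Fc Fr A B rho <-> valid_S kind Fc Fr A B rho.
Proof.
case: hrho => P_proj wn.
have wm : well_matched kind rho.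
  by apply: (well_matched_proj (comp := comp)) => k; exact: hP_wm (P_proj k).
split.
- move=> validM [S nu] s /(rel_word_Sstep_Mstep wm wn) [nu' -> Mrho] /= A_nu.
  exact: (validM _ _ (Mrho (fun k => ([::], nu k)) erefl)).
- move=> validS C C' /(rel_word_Mstep_Sstep wm wn) [nu' -> Srho] A_C.
  exact: (validS _ _ (Srho [::]) A_C).
Qed.
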